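(* Let $G$ be a graph with $n$ vertices and vertex degree sequence $d_1(G)\geq d_2(G)\geq \cdots \geq d_n(G)$, let $\mathcal{D}(G)$ be its double graph, and let $0\leq \alpha \leq 1$. Then $$S_{k}(A_{\alpha}(\mathcal{D}(G)))\leq \begin{cases} 4\sum_{i=1}^{k/2}d_i(G)+2(1-\alpha)S_k(A(G)), & \text{if } 1 < k< n \text{ is even};\\ 4\sum_{i=1}^{(k-1)/2}d_i(G)+2d_{(k+1)/2}(G)+2(1-\alpha)S_k(A(G)), & \text{if } 1 \leq k< n \text{ is odd};\\ 4\sum_{i=1}^{k/2}d_i(G), & \text{if } n \leq k\leq 2n \text{ is even};\\ 4\sum_{i=1}^{(k-1)/2}d_i(G)+2d_{(k+1)/2}(G), & \text{if } n \leq k\leq 2n \text{ is odd}. \end{cases}$$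
   Context: All graphs are simple and undirected. $A(G)$ is the adjacency matrix, $D(G)$ the diagonal degree matrix, and $A_{\alpha}(G)=\alpha D(G)+(1-\alpha)A(G)$. For a real symmetric matrix $M$ with eigenvalues $\lambda_1(M)\geq\cdots\geq\lambda_N(M)$, $S_k(M)=\sum_{i=1}^k\lambda_i(M)$. The double graph $\mathcal{D}(G)$ is obtained by taking two copies of $G$ and joining each vertex in one copy with the neighbors of the corresponding vertex in the other copy (so $A(\mathcal{D}(G))=\begin{pmatrix}1&1\\1&1\end{pmatrix}\otimes A(G)$). *)

From HB Require Import structures.
From mathcomp Require Import all_boot all_order all_algebra.
From mathcomp Require Import reals.
Set Implicit Arguments. Unset Strict Implicit. Unset Printing Implicit Defensive.
Import Order.TTheory GRing.Theory Num.Theory.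
Local Open Scope ring_scope.

(* A simple graph on vertex set 'I_n is a symmetric irreflexive e : rel 'I_n. *)

Definition deg (n : nat) (e : rel 'I_n) (i : 'I_n) : nat := #|[pred j | e i j]|.

Definition adjmx (R : nzRingType) (n : nat) (e : rel 'I_n) : 'M[R]_n :=
  \matrix_(i, j) (e i j)%:R.

Definition degmx (R : nzRingType) (n : nat) (e : rel 'I_n) : 'M[R]_n :=
  \matrix_(i, j) ((deg e i)%:R *+ (i == j)).

Definition Aalpha (R : nzRingType) (n : nat) (alpha : R) (e : rel 'I_n) : 'M[R]_n :=
  alpha *: degmx R e + (1 - alpha) *: adjmx R e.

(* The double graph D(G): vertex set 'I_(n + n) = two copies of 'I_n;
   (c, u) ~ (c', v) iff u ~ v in G (so A(D(G)) = [[1,1],[1,1]] (x) A(G)). *)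
Definition copy_of (n : nat) (x : 'I_(n + n)) : 'I_n :=
  match split x with inl a => a | inr b => b end.
Definition double_rel (n : nat) (e : rel 'I_n) : rel 'I_(n + n) :=
  fun x y => e (copy_of x) (copy_of y).

Definition is_eigvals (R : realFieldType) (m : nat) (M : 'M[R]_m) (s : seq R) : Prop :=
  sorted (fun x y => y <= x) s /\ char_poly M = \prod_(x <- s) ('X - x%:P).

Definition Ssum (R : realFieldType) (k : nat) (s : seq R) : R :=
  \sum_(i < k) nth 0 s i.

(* degree sequence d_1 >= ... >= d_n, 1-indexed: dseq e i = d_i(G) *)
Definition dseq (n : nat) (e : rel 'I_n) (i : nat) : nat :=
  nth 0%N (sort geq [seq deg e v | v <- enum 'I_n]) i.-1.

Definition dsum (n : nat) (e : rel 'I_n) (m : nat) : nat :=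
  \sum_(1 <= i < m.+1) dseq e i.

Definition bound64 (R : realFieldType) (n : nat) (e : rel 'I_n) (alpha : R)
    (k : nat) (SkA : R) : R :=
  if (k < n)%N then
    (if ~~ odd k then 4 * (dsum e k./2)%:R + 2 * (1 - alpha) * SkA
     else 4 * (dsum e k.-1./2)%:R + 2 * (dseq e k.+1./2)%:R + 2 * (1 - alpha) * SkA)
  else
    (if ~~ odd k then 4 * (dsum e k./2)%:R
     else 4 * (dsum e k.-1./2)%:R + 2 * (dseq e k.+1./2)%:R).

From HB Require Import structures.
From mathcomp Require Import all_boot all_order all_algebra.
From mathcomp Require Import reals.
From mathcomp Require Import complex perm ring lra.
Import Order.TTheory GRing.Theory Num.Theory.
Local Open Scope ring_scope.
Local Open Scope sesquilinear_scope.

(* If u_1, ..., u_N are orthonormal eigenvectors of a nonnegative symmetric matrix M, listed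
   by nonincreasing eigenvalue, then S_k(M) = sum_(j < k) u_j^* M u_j, and each term is at
   most sum_a r_a |u_j(a)|^2, where r_a is the a-th row sum of M.  Hence
   S_k(M) <= sum_a r_a w_a for weights 0 <= w_a <= 1 of total mass k.  The row sums of
   A_alpha(D(G)) are the degrees 2 d(u) of the double graph, each vertex of G occurring
   twice; merging the two copies gives weights in [0, 2] of mass k on V(G), and the weighted
   degree sum is then at most 2 (d_1 + ... + d_(k/2)), plus d_((k+1)/2) when k is odd.
   For k < n the extra term 2 (1 - alpha) S_k(A(G)) is nonnegative, since A(G) has
   trace 0. *)

Lemma big_ord_narrow_idx {T : Type} {idx : T} {op : Monoid.law idx} {n1 n2}
    {F : nat -> T} :
  (n1 <= n2)%N -> (forall i, (n1 <= i)%N -> F i = idx) ->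
  \big[op/idx]_(i < n2) F i = \big[op/idx]_(i < n1) F i.
Proof.
move=> le_n12 F_idx; rewrite (big_ord_widen _ _ le_n12) [RHS]big_mkcond.
by apply: eq_bigr => i _; case: ltnP => // /F_idx.
Qed.

Lemma nth_sort_geq_antitone (s : seq nat) i j : (i <= j)%N ->
  (nth 0 (sort geq s) j <= nth 0 (sort geq s) i)%N.
Proof.
move=> le_ij; have [lt_j|le_j] := ltnP j (size (sort geq s)); last first.
  by rewrite nth_default.
have geq_trans : transitive geq by move=> a b c /= ba cb; apply: leq_trans cb ba.
apply: (sorted_leq_nth geq_trans leqnn 0 (sort_sorted (fun a b => leq_total b a) s)) => //.
by rewrite inE (leq_ltn_trans le_ij lt_j).
Qed.

Section TopWeightedSum.
Variables (R : realFieldType) (I : finType) (f : I -> nat).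
Let L := sort geq [seq f u | u <- enum I].

Lemma sum_subn_sort (m : nat) (t := nth 0%N L m) :
  (\sum_u (f u - t))%N = (\sum_(i < m) (nth 0 L i - t))%N.
Proof.
have tail0 i : (minn m (size L) <= i)%N -> (nth 0 L i - t = 0)%N.
  rewrite geq_min => /orP[le_mi|le_si]; apply/eqP; rewrite subn_eq0.
    exact: nth_sort_geq_antitone.
  by rewrite nth_default.
have -> : (\sum_u (f u - t) = \sum_(x <- [seq f u | u <- enum I]) (x - t))%N.
  by rewrite big_map big_enum.
rewrite -(perm_big _ (permEl (perm_sort geq _))) -/L (big_nth 0) big_mkord.
rewrite (big_ord_narrow_idx (geq_minr m _) tail0).
by rewrite (big_ord_narrow_idx (geq_minl m (size L)) tail0).
Qed.

Lemma weighted_sum_le_sort (c : R) (v : I -> R) (m : nat) (t := nth 0%N L m) :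
    (forall u, 0 <= v u <= c) ->
  \sum_u (f u)%:R * v u <=
    c * (\sum_(i < m) nth 0%N L i)%:R + t%:R * (\sum_u v u - c * m%:R).
Proof.
move=> v_bounds.
(* The truncated difference [(f u - t)%N] is the positive part of [f u - t]. *)
have pointwise u : (f u)%:R * v u <= c * (f u - t)%N%:R + t%:R * v u.
  have /andP[v_ge0 v_lec] := v_bounds u.
  have [le_tf|lt_ft] := leqP t (f u).
    have : t%:R <= (f u)%:R :> R by rewrite ler_nat.
    rewrite natrB //; nra.
  have : (f u)%:R < t%:R :> R by rewrite ltr_nat.
  rewrite (eqP (ltnW lt_ft)) mulr0n mulr0 add0r; nra.
apply: le_trans (ler_sum _ (fun u _ => pointwise u)) _.
have sum_shift : (\sum_(i < m) (nth 0%N L i - t))%N%:R =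
    \sum_(i < m) ((nth 0%N L i)%:R - t%:R) :> R.
  rewrite natr_sum; apply: eq_bigr => i _.
  by rewrite natrB // nth_sort_geq_antitone // ltnW.
rewrite big_split /= -!mulr_sumr -natr_sum sum_subn_sort sum_shift.
by rewrite sumrB sumr_const card_ord -natr_sum -mulr_natl; lra.
Qed.

End TopWeightedSum.

Lemma copy_of_lshift n (u : 'I_n) : copy_of (lshift n u) = u.
Proof. by rewrite /copy_of -[lshift n u]/(unsplit (inl u)) unsplitK. Qed.

Lemma copy_of_rshift n (u : 'I_n) : copy_of (rshift n u) = u.
Proof. by rewrite /copy_of -[rshift n u]/(unsplit (inr u)) unsplitK. Qed.

Lemma double_rel_sym {n} {e : rel 'I_n} : symmetric e -> symmetric (double_rel e).
Proof. by move=> e_sym x y; apply: e_sym. Qed.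

Lemma deg_double_rel n (e : rel 'I_n) x :
  deg (double_rel e) x = (deg e (copy_of x)).*2.
Proof.
rewrite /deg -!sum1_card big_split_ord /= -addnn.
congr (_ + _)%N; apply: eq_bigl => u.
  by rewrite !inE /double_rel copy_of_lshift.
by rewrite !inE /double_rel copy_of_rshift.
Qed.

Lemma natr_deg (R : nzRingType) m (e : rel 'I_m) x :
  (deg e x)%:R = \sum_y (e x y)%:R :> R.
Proof.
rewrite /deg -sum1_card natr_sum big_mkcond /=.
by apply: eq_bigr => y _; rewrite inE; case: (e x y).
Qed.

Lemma rowsum_Aalpha (R : nzRingType) m (alpha : R) (e : rel 'I_m) x :
  \sum_y Aalpha alpha e x y = (deg e x)%:R.
Proof.
have -> : \sum_y Aalpha alpha e x y =
    alpha * \sum_y (deg e x)%:R *+ (x == y) + (1 - alpha) * \sum_y (e x y)%:R.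
  by rewrite !mulr_sumr -big_split; apply: eq_bigr => y _; rewrite !mxE.
rewrite (bigD1 x) //= eqxx big1 ?addr0; last by move=> y; rewrite eq_sym => /negbTE ->.
by rewrite -natr_deg -mulrDl [alpha + _]addrC subrK mul1r.
Qed.

Lemma Aalpha_sym {R : nzRingType} {m} {alpha : R} {e : rel 'I_m} :
  symmetric e -> forall a b, Aalpha alpha e a b = Aalpha alpha e b a.
Proof. by move=> e_sym a b; rewrite !mxE eq_sym e_sym; case: eqVneq => [->|]. Qed.

Lemma Aalpha_ge0 {R : numDomainType} {m} {alpha : R} {e : rel 'I_m} :
  0 <= alpha <= 1 -> forall a b, 0 <= Aalpha alpha e a b.
Proof.
case/andP=> alpha_ge0 alpha_le1 a b; rewrite !mxE.
by rewrite addr_ge0 ?mulr_ge0 ?mulrn_wge0 ?subr_ge0.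
Qed.

Lemma mxtrace_adjmx (R : nzRingType) m (e : rel 'I_m) :
  irreflexive e -> \tr (adjmx R e) = 0.
Proof. by move=> e_irr; rewrite /mxtrace big1 // => i _; rewrite mxE e_irr. Qed.

Lemma dsumE n (e : rel 'I_n) m :
  dsum e m = (\sum_(i < m) nth 0 (sort geq [seq deg e v | v <- enum 'I_n]) i)%N.
Proof. by rewrite /dsum big_add1 /= big_mkord. Qed.

Lemma double_weighted_degree_le {R : realFieldType} {n} {e : rel 'I_n}
    {w : 'I_(n + n) -> R} {k} :
  (forall x, 0 <= w x <= 1) -> \sum_x w x = k%:R ->
  \sum_x ((deg e (copy_of x)).*2)%:R * w x <=
    4 * (dsum e k./2)%:R + 2 * (odd k)%:R * (dseq e k./2.+1)%:R.
Proof.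
move=> w_bounds w_sum.
pose v u := w (lshift n u) + w (rshift n u).
have v_bounds u : 0 <= v u <= 2.
  move: (w_bounds (lshift n u)) (w_bounds (rshift n u)) => /andP[? ?] /andP[? ?].
  by apply/andP; split; rewrite /v; lra.
have v_sum : \sum_u v u = k%:R by rewrite -w_sum big_split_ord /= -big_split.
have -> : \sum_x ((deg e (copy_of x)).*2)%:R * w x = 2 * \sum_u (deg e u)%:R * v u.
  rewrite big_split_ord /= mulr_sumr -big_split /=; apply: eq_bigr => u _.
  by rewrite copy_of_lshift copy_of_rshift -muln2 natrM /v; ring.
have := @weighted_sum_le_sort R _ (deg e) 2 v k./2 v_bounds.
rewrite v_sum -dsumE -/(dseq e k./2.+1).
have -> : k%:R - 2 * (k./2)%:R = (odd k)%:R :> R.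
  by rewrite -{1}(odd_double_half k) natrD -muln2 natrM; ring.
lra.
Qed.

Lemma bound64E (R : realFieldType) n (e : rel 'I_n) (alpha : R) k (S : R) :
  bound64 e alpha k S = 4 * (dsum e k./2)%:R + 2 * (odd k)%:R * (dseq e k./2.+1)%:R
                        + (k < n)%:R * (2 * (1 - alpha) * S).
Proof.
have [k_odd|k_even] := boolP (odd k).
  have k_half : k = (k./2).*2.+1 by rewrite -[k in LHS]odd_double_half k_odd.
  have half_pred : k.-1./2 = k./2 by rewrite {1}k_half /= doubleK.
  have half_succ : k.+1./2 = k./2.+1 by rewrite {1}k_half /= doubleK.
  rewrite /bound64 k_odd half_pred half_succ.
  by case: (k < n)%N; rewrite /= ?mul1r ?mul0r; ring.
rewrite /bound64 (negbTE k_even) /=.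
by case: (k < n)%N; rewrite /= ?mul1r ?mul0r; ring.
Qed.

Lemma size_eigvals {R : realFieldType} {m} {M : 'M[R]_m} {s} :
  is_eigvals M s -> size s = m.
Proof. by case=> _ charM; have := size_char_poly M; rewrite charM size_prod_XsubC => -[]. Qed.

Lemma sum_eigvals {R : realFieldType} {m} {M : 'M[R]_m} {s} :
  is_eigvals M s -> \sum_(x <- s) x = \tr M.
Proof.
move=> M_eig; have size_s := size_eigvals M_eig; case: M_eig => _ charM.
case: m => [|m] in M size_s charM *.
  by rewrite (size0nil size_s) big_nil /mxtrace big_ord0.
by apply: oppr_inj; rewrite -char_poly_trace // charM -coefPn_prod_XsubC ?size_s.
Qed.

Lemma Ssum_ge0_of_sum0 {R : realFieldType} {s : seq R} {k} :
  sorted >=%R s -> \sum_(x <- s) x = 0 -> (k < size s)%N -> 0 <= Ssum k s.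
Proof.
move=> s_sorted s_sum0 lt_ks.
have nth_anti i j : (i <= j)%N -> (j < size s)%N -> nth 0 s j <= nth 0 s i.
  move=> le_ij lt_js.
  by apply: (sorted_leq_nth ge_trans lexx 0 s_sorted); rewrite // inE (leq_ltn_trans le_ij).
set t := nth 0 s k.
have split_sum : \sum_(x <- s) x = Ssum k s + \sum_(k <= i < size s) nth 0 s i.
  by rewrite (big_nth 0) (big_cat_nat (leq0n k) (ltnW lt_ks)) /= big_mkord.
rewrite s_sum0 in split_sum.
have head_ge : k%:R * t <= Ssum k s.
  have -> : k%:R * t = \sum_(i < k) t by rewrite sumr_const card_ord mulr_natl.
  by apply: ler_sum => i _; apply: nth_anti (ltnW (ltn_ord i)) lt_ks.
have tail_le : \sum_(k <= i < size s) nth 0 s i <= (size s - k)%:R * t.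
  have -> : (size s - k)%:R * t = \sum_(k <= i < size s) t.
    by rewrite sumr_const_nat mulr_natl.
  by apply: ler_sum_nat => i /andP[le_ki lt_is]; apply: nth_anti.
have tail_len_gt0 : 0 < (size s - k)%:R :> R by rewrite ltr0n subn_gt0.
have [t_ge0|t_lt0] := lerP 0 t; first by apply: le_trans head_ge; rewrite mulr_ge0.
have : (size s - k)%:R * t < 0 by rewrite pmulr_rlt0.
lra.
Qed.

Lemma char_poly_similar {F : fieldType} {n} (P A : 'M[F]_n) :
  P \in unitmx -> char_poly (invmx P *m A *m P) = char_poly A.
Proof.
move=> P_unit; rewrite /char_poly /char_poly_mx.
set Q := map_mx polyC P; set Qi := map_mx polyC (invmx P).
have QiQ : Qi *m Q = 1%:M by rewrite -map_mxM mulVmx // map_mx1.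
have QQi : Q *m Qi = 1%:M by rewrite -map_mxM mulmxV // map_mx1.
have -> : 'X%:M - map_mx polyC (invmx P *m A *m P) = Qi *m ('X%:M - map_mx polyC A) *m Q.
  rewrite mulmxBr mulmxBl !map_mxM -/Q -/Qi; congr (_ - _).
  by rewrite scalar_mxC -mulmxA QiQ mulmx1.
by rewrite !det_mulmx mulrC mulrA -det_mulmx QQi det1 mul1r.
Qed.

Lemma sesq_form_le_rowsum {C : numClosedFieldType} {N} {M : 'M[C]_N} :
    (forall a b, M a b = M b a) -> (forall a b, 0 <= M a b) ->
  forall x : 'I_N -> C,
  \sum_a \sum_b x a * M a b * (x b)^* <= \sum_a (\sum_b M a b) * (x a * (x a)^*).
Proof.
move=> M_sym M_ge0 x.
set form := \sum_a \sum_b _; set diag := \sum_a _.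
have diag_sym : \sum_a \sum_b M a b * (x b * (x b)^*) = diag.
  rewrite exchange_big /diag; apply: eq_bigr => a _; rewrite mulr_suml.
  by apply: eq_bigr => b _; rewrite M_sym.
have form_conj : \sum_a \sum_b M a b * (x b * (x a)^*) = form.
  rewrite exchange_big; apply: eq_bigr => a _; apply: eq_bigr => b _.
  by rewrite M_sym mulrCA mulrA.
have expand : \sum_a \sum_b M a b * ((x a - x b) * (x a - x b)^*) = 2 * (diag - form).
  transitivity (\sum_a \sum_b M a b * (x a * (x a)^*) + \sum_a \sum_b M a b * (x b * (x b)^*)
      - \sum_a \sum_b M a b * (x b * (x a)^*) - form).
    rewrite -big_split -!sumrB /=; apply: eq_bigr => a _.
    rewrite -big_split -!sumrB /=; apply: eq_bigr => b _.
    by rewrite rmorphB /=; ring.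
  rewrite diag_sym form_conj.
  under [X in X + _ - _ - _]eq_bigr do rewrite -mulr_suml.
  by rewrite /diag; ring.
have : 0 <= 2 * (diag - form).
  rewrite -expand; apply: sumr_ge0 => a _; apply: sumr_ge0 => b _.
  by rewrite mulr_ge0 ?mul_conjC_ge0.
by rewrite pmulr_rge0 ?ltr0n // subr_ge0.
Qed.

Section UnitaryRows.
Context {C : numClosedFieldType} {N : nat} {P : 'M[C]_N}.
Hypothesis P_unitary : P \is unitarymx.

Lemma unitary_row_sqnorm j : \sum_a P j a * (P j a)^* = 1.
Proof.
have /matrixP/(_ j j) := unitarymxP P_unitary; rewrite !mxE eqxx mulr1n => <-.
by apply: eq_bigr => a _; rewrite !mxE.
Qed.

Lemma unitary_col_sqnorm a : \sum_j P j a * (P j a)^* = 1.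
Proof.
have := mulVmx (unitarymx_unit P_unitary); rewrite invmx_unitary //.
move/matrixP/(_ a a); rewrite !mxE eqxx mulr1n => <-.
by apply: eq_bigr => j _; rewrite !mxE mulrC.
Qed.

Lemma unitary_partial_col_sqnorm_le1 (I : pred 'I_N) a :
  \sum_(j | I j) P j a * (P j a)^* <= 1.
Proof.
rewrite -(unitary_col_sqnorm a) [X in _ <= X](bigID I) /= lerDl.
by apply: sumr_ge0 => j _; apply: mul_conjC_ge0.
Qed.

Lemma unitary_diag_form {M : 'M[C]_N} {d : 'rV[C]_N} :
  M = invmx P *m diag_mx d *m P ->
  forall j, d 0 j = \sum_a \sum_b P j a * M a b * (P j b)^*.
Proof.
move=> M_diag j; have PPt := unitarymxP P_unitary.
have : P *m M *m P^t* = diag_mx d.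
  by rewrite M_diag invmx_unitary // !mulmxA PPt mul1mx -mulmxA PPt mulmx1.
move/matrixP/(_ j j); rewrite [in RHS]mxE eqxx mulr1n => <-.
rewrite mxE exchange_big; apply: eq_bigr => b _.
by rewrite !mxE mulr_suml.
Qed.

End UnitaryRows.

Lemma eigvals_spectral_perm {R : rcfType} {N} {M : 'M[R]_N} {s}
    (Mc := map_mx (real_complex R) M) :
  is_eigvals M s -> Mc \is normalmx ->
  exists p : 'S_N, forall i : 'I_N, (nth 0 s i)%:C%C = spectral_diag Mc 0 (p i).
Proof.
move=> M_eig Mc_normal; have size_s := size_eigvals M_eig; case: M_eig => _ charM.
set d := spectral_diag Mc.
have charMc_s : char_poly Mc = \prod_(x <- map (real_complex R) s) ('X - x%:P).
  rewrite -map_char_poly charM rmorph_prod big_map; apply: eq_bigr => x _.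
  exact: map_polyXsubC.
have charMc_d : char_poly Mc = \prod_(x <- [tuple d 0 i | i < N]) ('X - x%:P).
  rewrite {1}(orthomx_spectralP Mc_normal) char_poly_similar ?spectral_unit //.
  rewrite char_poly_trig ?diag_mx_is_trig // big_tuple.
  by apply: eq_bigr => i _; rewrite tnth_mktuple !mxE eqxx mulr1n.
have /tuple_permP[p s_perm] : perm_eq (map (real_complex R) s) [tuple d 0 i | i < N].
  by apply: prod_XsubC_eq; rewrite -charMc_s charMc_d.
exists p => i; rewrite -(nth_map 0 0 (real_complex R)) ?size_s // s_perm -tnth_nth.
by rewrite !tnth_mktuple.
Qed.

Lemma Ssum_eigvals_le_rowsum {R : rcfType} {N} {M : 'M[R]_N} {s} {k} :
    (forall a b, M a b = M b a) -> (forall a b, 0 <= M a b) ->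
    is_eigvals M s -> (k <= N)%N ->
  exists w : 'I_N -> R, [/\ forall a, 0 <= w a <= 1, \sum_a w a = k%:R &
    Ssum k s <= \sum_a (\sum_b M a b) * w a].
Proof.
move=> M_sym M_ge0 M_eig le_kN.
pose Mc := map_mx (real_complex R) M.
have Mc_sym a b : Mc a b = Mc b a by rewrite !mxE M_sym.
have Mc_ge0 a b : 0 <= Mc a b by rewrite mxE -(rmorph0 (real_complex R)) lecR.
have Mc_normal : Mc \is normalmx.
  have Mc_herm : Mc ^t* = Mc.
    by apply/matrixP => a b; rewrite !mxE conj_Creal ?complex_real // M_sym.
  by rewrite qualifE Mc_herm.
have [p s_diag] := eigvals_spectral_perm M_eig Mc_normal.
have P_unitary := spectral_unitarymx Mc; set P := spectralmx Mc in P_unitary.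
(* The rows of P are eigenvectors; I selects those of the k largest eigenvalues. *)
pose I := [pred j | (p^-1 j < k)%N]%g.
have sum_I (F : 'I_N -> complex R) : \sum_(j | I j) F j = \sum_(i < N | (i < k)%N) F (p i).
  by rewrite (reindex_inj (@perm_inj _ p)); apply: eq_bigl => i; rewrite /= permK.
pose W a := \sum_(j | I j) P j a * (P j a)^*.
have W_ge0 a : 0 <= W a by apply: sumr_ge0 => j _; apply: mul_conjC_ge0.
have W_real a : (complex.Re (W a))%:C%C = W a by apply/RRe_real/ger0_real.
exists (fun a => complex.Re (W a)); split.
- move=> a; have := unitary_partial_col_sqnorm_le1 P_unitary I a; have := W_ge0 a.
  by rewrite -/(W a) -W_real -[0]/(0%:C)%C -[1]/(1%:C)%C !lecR => -> ->.
- have W_sum : \sum_a W a = k%:R.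
    rewrite exchange_big /= (eq_bigr (fun=> 1)) => [|j _]; last exact: unitary_row_sqnorm.
    by rewrite sum_I -(big_ord_widen _ (fun=> 1) le_kN) sumr_const card_ord.
  apply: (@complexI R); rewrite rmorph_sum rmorph_nat -W_sum.
  by apply: eq_bigr => a _; apply: W_real.
rewrite -lecR /Ssum rmorph_sum (big_ord_widen N (fun i => (nth 0 s i)%:C%C) le_kN).
under eq_bigr do rewrite s_diag (unitary_diag_form P_unitary (orthomx_spectralP Mc_normal)).
rewrite -(sum_I (fun j => \sum_a \sum_b P j a * Mc a b * (P j b)^*)).
apply: le_trans (ler_sum _ (fun j _ => sesq_form_le_rowsum Mc_sym Mc_ge0 (P j))) _.
rewrite exchange_big rmorph_sum; apply: ler_sum => a _.
rewrite -mulr_sumr -/(W a) -W_real rmorphM rmorph_sum.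
by under [X in X * _ <= _]eq_bigr do rewrite mxE.
Qed.

Theorem theorem6p4 (R : realType) (n : nat) (e : rel 'I_n)
  (e_sym : symmetric e) (e_irr : irreflexive e)
  (alpha : R) (ha0 : 0 <= alpha) (ha1 : alpha <= 1)
  (k : nat) (hk1 : (1 <= k)%N) (hk2 : (k <= 2 * n)%N)
  (sD sA : seq R)
  (hsD : is_eigvals (Aalpha alpha (double_rel e)) sD)
  (hsA : is_eigvals (adjmx R e) sA) :
  Ssum k sD <= bound64 e alpha k (Ssum k sA).
Proof.
have alpha01 : 0 <= alpha <= 1 by rewrite ha0 ha1.
have le_k_2n : (k <= n + n)%N by rewrite addnn -mul2n.
have [w [w_bounds w_sum Sk_le]] := Ssum_eigvals_le_rowsum
  (Aalpha_sym (double_rel_sym e_sym)) (Aalpha_ge0 alpha01) hsD le_k_2n.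
have row_sums : \sum_x (\sum_y Aalpha alpha (double_rel e) x y) * w x =
    \sum_x ((deg e (copy_of x)).*2)%:R * w x.
  by apply: eq_bigr => x _; rewrite rowsum_Aalpha deg_double_rel.
rewrite row_sums in Sk_le.
rewrite bound64E -[Ssum k sD]addr0; apply: lerD.
  exact: le_trans Sk_le (double_weighted_degree_le w_bounds w_sum).
have [lt_kn|_] := ltnP k n; last by rewrite mul0r.
have sA_sum0 : \sum_(x <- sA) x = 0 by rewrite (sum_eigvals hsA) mxtrace_adjmx.
have SA_ge0 : 0 <= Ssum k sA.
  by apply: Ssum_ge0_of_sum0 hsA.1 sA_sum0 _; rewrite (size_eigvals hsA) lt_kn.
by rewrite mul1r !mulr_ge0 ?subr_ge0.
Qed.
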